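(* Let ${\cal H}_1=(V_1,{\cal E}_1)$ and ${\cal H}_2=(V_2,{\cal E}_2)$ be vertex-disjoint $1$-Sperner hypergraphs and let $z\notin V_1\cup V_2$. Then the gluing ${\cal H}_1\odot{\cal H}_2$ is a $1$-Sperner hypergraph, unless ${\cal E}_1=\{V_1\}$ and ${\cal E}_2=\{\emptyset\}$, in which case ${\cal H}_1\odot{\cal H}_2$ is not Sperner.
   Context: A hypergraph ${\cal H}=(V,{\cal E})$ consists of a finite vertex set $V$ and a set ${\cal E}$ of subsets of $V$ (hyperedges). It is Sperner if no hyperedge properly contains another, and $1$-Sperner if every two distinct hyperedges $e,f$ satisfy $\min\{|e\setminus f|,|f\setminus e|\}=1$ (in particular every hypergraph with at most one hyperedge is $1$-Sperner). Given vertex-disjoint hypergraphs ${\cal H}_1=(V_1,{\cal E}_1)$, ${\cal H}_2=(V_2,{\cal E}_2)$ and a new vertex $z\notin V_1\cup V_2$, the gluing ${\cal H}_1\odot{\cal H}_2$ is the hypergraph with vertex set $V_1\cup V_2\cup\{z\}$ and hyperedge set $\{\{z\}\cup e: e\in{\cal E}_1\}\cup\{V_1\cup e: e\in{\cal E}_2\}$. *)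

From mathcomp Require Import all_boot.
Set Implicit Arguments. Unset Strict Implicit. Unset Printing Implicit Defensive.

Definition is_hypergraph (T : finType) (V : {set T}) (E : {set {set T}}) : Prop :=
  forall e, e \in E -> e \subset V.

Definition sperner (T : finType) (E : {set {set T}}) : Prop :=
  forall e f, e \in E -> f \in E -> ~ (e \proper f).

Definition one_sperner (T : finType) (E : {set {set T}}) : Prop :=
  forall e f, e \in E -> f \in E -> e != f ->
    minn #|e :\: f| #|f :\: e| = 1.

Definition glue_vertices (T : finType) (V1 V2 : {set T}) (z : T) : {set T} :=
  V1 :|: V2 :|: [set z].

Definition glue_edges (T : finType) (V1 : {set T}) (E1 E2 : {set {set T}}) (z : T)
  : {set {set T}} :=
  [set z |: e | e in E1] :|: [set V1 :|: e | e in E2].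

From mathcomp Require Import all_boot.

Set Implicit Arguments.
Unset Strict Implicit.
Unset Printing Implicit Defensive.

(* Adding a common set disjoint from the edges does not change the
   differences between edges, so both halves {z ∪ e} and {V1 ∪ f} of the
   gluing inherit the 1-Sperner property.  For a mixed pair,
   (z ∪ e) \ (V1 ∪ f) = {z}, so the minimum is 1 unless
   (V1 ∪ f) \ (z ∪ e) = (V1 \ e) ∪ f is empty, i.e. e = V1 and f = ∅;
   as 1-Sperner families are Sperner, this forces E1 = {V1} and E2 = {∅},
   where V1 ⊊ z ∪ V1 are both edges of the gluing. *)

Section OneSperner.

Variable T : finType.
Implicit Types (A e f : {set T}) (E F : {set {set T}}).

Lemma one_sperner_sperner E : one_sperner E -> sperner E.
Proof.
move=> hE e f he hf ef.
have := hE e f he hf (proper_neq ef).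
by move: ef => /properP[]; rewrite -setD_eq0 => /eqP -> _; rewrite cards0 min0n.
Qed.

Lemma sperner_comparable_edge E e0 :
  sperner E -> e0 \in E -> {in E, forall e, (e \subset e0) || (e0 \subset e)} ->
  E = [set e0].
Proof.
move=> hE he0 cmp; apply/setP=> e; rewrite inE.
apply/idP/eqP=> [he|->//]; apply/eqP; apply/negPn/negP=> ne.
case/orP: (cmp e he) => sub.
  by apply: (hE e e0 he he0); rewrite properEneq ne.
by apply: (hE e0 e he0 he); rewrite properEneq eq_sym ne.
Qed.

Lemma setUD_setU A e f : [disjoint A & e] -> (A :|: e) :\: (A :|: f) = e :\: f.
Proof.
move=> dAe; rewrite setDUl setDUr setDv set0I set0U -setDDl.
by congr (_ :\: _); apply/setDidPl; rewrite disjoint_sym.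
Qed.

Lemma one_sperner_imset_setU A E :
  {in E, forall e, [disjoint A & e]} -> one_sperner E ->
  one_sperner [set A :|: e | e in E].
Proof.
move=> dAE hE _ _ /imsetP[e he ->] /imsetP[f hf ->] ne.
rewrite !setUD_setU ?dAE //; apply: hE => //.
by apply: contraNneq ne => ->.
Qed.

Lemma one_sperner_setU E F :
  one_sperner E -> one_sperner F ->
  (forall e f, e \in E -> f \in F -> minn #|e :\: f| #|f :\: e| = 1) ->
  one_sperner (E :|: F).
Proof.
move=> hE hF hEF e f; rewrite !inE.
case/orP=> he; case/orP=> hf ne; do ?[exact: hE | exact: hF | exact: hEF].
by rewrite minnC; apply: hEF.
Qed.

Lemma hypergraph_notin_edge V E x e :
  is_hypergraph V E -> x \notin V -> e \in E -> x \notin e.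
Proof. by move=> hVE xV he; apply: contra xV; apply/subsetP/hVE. Qed.

End OneSperner.

Lemma glue_degenerate_not_sperner (T : finType) (V1 : {set T}) (z : T) :
  z \notin V1 -> ~ sperner (glue_edges V1 [set V1] [set set0] z).
Proof.
move=> zV1 hs; apply: (hs V1 (z |: V1)); rewrite ?inE.
- by apply/orP; right; apply/imsetP; exists set0; rewrite ?inE ?setU0.
- by apply/orP; left; apply/imsetP; exists V1; rewrite ?inE.
- by rewrite properUr // sub1set.
Qed.

Section Gluing.

Variables (T : finType) (V1 V2 : {set T}) (E1 E2 : {set {set T}}) (z : T).
Hypotheses (hE1 : is_hypergraph V1 E1) (hE2 : is_hypergraph V2 E2).
Hypotheses (dV12 : [disjoint V1 & V2]) (zV1 : z \notin V1) (zV2 : z \notin V2).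

Lemma glue_hypergraph : is_hypergraph (glue_vertices V1 V2 z) (glue_edges V1 E1 E2 z).
Proof.
move=> g; rewrite inE => /orP[] /imsetP[e he ->];
  apply/subsetP=> x; rewrite !inE.
  by case/orP=> [->|/(subsetP (hE1 he)) ->]; rewrite ?orbT.
by case/orP=> [->|/(subsetP (hE2 he)) ->]; rewrite ?orbT.
Qed.

Lemma disjoint_z_edge1 e : e \in E1 -> [disjoint [set z] & e].
Proof. by move=> he; rewrite disjoints1 (hypergraph_notin_edge hE1 zV1 he). Qed.

Lemma disjoint_V1_edge2 f : f \in E2 -> [disjoint V1 & f].
Proof. by move=> hf; apply: disjointWr (hE2 hf) dV12. Qed.

Lemma glue_cross_diff_z e f :
  e \in E1 -> f \in E2 -> (z |: e) :\: (V1 :|: f) = [set z].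
Proof.
move=> he hf; apply/setP=> x; rewrite !inE.
have [->|xz] := eqVneq x z.
  by rewrite (negbTE zV1) (negbTE (hypergraph_notin_edge hE2 zV2 hf)).
by case xe: (x \in e); rewrite ?andbF // (subsetP (hE1 he)).
Qed.

Lemma glue_cross_diff_eq0 e f : e \in E1 -> f \in E2 ->
  (V1 :|: f) :\: (z |: e) = set0 -> e = V1 /\ f = set0.
Proof.
move=> he hf /eqP; rewrite setD_eq0 subUset => /andP[sV1 sf]; split.
  apply/eqP; rewrite eqEsubset hE1 //; apply/subsetP=> x xV1.
  have := subsetP sV1 x xV1; rewrite !inE => /orP[/eqP xz|//].
  by move: zV1; rewrite -xz xV1.
apply/eqP; rewrite -subset0; apply/subsetP=> x xf.
have := subsetP sf x xf; rewrite !inE => /orP[/eqP xz|xe].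
  by move: (hypergraph_notin_edge hE2 zV2 hf); rewrite -xz xf.
have := disjoint_V1_edge2 hf; rewrite disjoints_subset => /subsetP/(_ x).
by rewrite (subsetP (hE1 he)) // inE xf => /(_ isT).
Qed.

Lemma glue_cross_min e f :
  one_sperner E1 -> one_sperner E2 -> ~ (E1 = [set V1] /\ E2 = [set set0]) ->
  e \in E1 -> f \in E2 ->
  minn #|(z |: e) :\: (V1 :|: f)| #|(V1 :|: f) :\: (z |: e)| = 1.
Proof.
move=> s1 s2 nondeg he hf; rewrite glue_cross_diff_z // cards1.
apply/minn_idPl; rewrite card_gt0; apply/negP=> /eqP/glue_cross_diff_eq0.
case=> // eV1 f0; apply: nondeg; split.
  apply: sperner_comparable_edge (one_sperner_sperner s1) _ _; first by rewrite -eV1.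
  by move=> e' he'; rewrite hE1.
apply: sperner_comparable_edge (one_sperner_sperner s2) _ _; first by rewrite -f0.
by move=> f' _; rewrite sub0set orbT.
Qed.

Lemma glue_one_sperner :
  one_sperner E1 -> one_sperner E2 -> ~ (E1 = [set V1] /\ E2 = [set set0]) ->
  one_sperner (glue_edges V1 E1 E2 z).
Proof.
move=> s1 s2 nondeg; apply: one_sperner_setU.
- exact: one_sperner_imset_setU disjoint_z_edge1 s1.
- exact: one_sperner_imset_setU disjoint_V1_edge2 s2.
- by move=> _ _ /imsetP[e he ->] /imsetP[f hf ->]; apply: glue_cross_min.
Qed.

End Gluing.

Theorem proposition2 (T : finType) (V1 V2 : {set T}) (E1 E2 : {set {set T}}) (z : T) :
  is_hypergraph V1 E1 -> is_hypergraph V2 E2 ->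
  [disjoint V1 & V2] ->
  z \notin V1 :|: V2 ->
  one_sperner E1 -> one_sperner E2 ->
  is_hypergraph (glue_vertices V1 V2 z) (glue_edges V1 E1 E2 z) /\
  (~ (E1 = [set V1] /\ E2 = [set set0]) -> one_sperner (glue_edges V1 E1 E2 z)) /\
  (E1 = [set V1] /\ E2 = [set set0] -> ~ sperner (glue_edges V1 E1 E2 z)).
Proof.
move=> hE1 hE2 dV12; rewrite inE negb_or => /andP[zV1 zV2] s1 s2.
split; first exact: glue_hypergraph.
split; first exact: (glue_one_sperner hE1 hE2 dV12 zV1 zV2).
by case=> -> ->; apply: glue_degenerate_not_sperner.
Qed.
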